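(* Let three binary classifiers $i,j,k$ be error independent on a test with $Q_a,Q_b\ge1$. Define from the observed frequencies $f_{b_i}=f_{baa}+f_{bab}+f_{bba}+f_{bbb}$, $f_{b_j}=f_{aba}+f_{abb}+f_{bba}+f_{bbb}$, $f_{b_k}=f_{aab}+f_{abb}+f_{bab}+f_{bbb}$, $\Delta_{i,j}=f_{bba}+f_{bbb}-f_{b_i}f_{b_j}$, $\Delta_{i,k}=f_{bab}+f_{bbb}-f_{b_i}f_{b_k}$, $\Delta_{j,k}=f_{abb}+f_{bbb}-f_{b_j}f_{b_k}$, $\Delta_{i,j,k}=f_{bbb}-\big(f_{b_i}f_{b_j}f_{b_k}+f_{b_i}\Delta_{j,k}+f_{b_j}\Delta_{i,k}+f_{b_k}\Delta_{i,j}\big)$. Set $\alpha=\Delta_{i,j,k}^2+4\Delta_{i,j}\Delta_{i,k}\Delta_{j,k}$ and $\gamma=\Delta_{i,j}\Delta_{i,k}\Delta_{j,k}$. Then the true prevalence $p_a$ satisfies $\alpha p_a^2-\alpha p_a+\gamma=0$; moreover, if $\alpha\neq 0$, the two roots of $\alpha x^2-\alpha x+\gamma$ are exactly $p_a$ and $p_b=1-p_a$.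
   Context: Test of $Q$ items with true labels $t_q\in\{a,b\}$; $Q_\ell=\#\{q:t_q=\ell\}$, $p_\ell=Q_\ell/Q$. Classifier $c\in\{i,j,k\}$ labels item $q$ with $\ell^q_c\in\{a,b\}$; label accuracy $p_{c,\ell}=\frac1{Q_\ell}\#\{q:\ell^q_c=\ell,t_q=\ell\}$. $f_{\ell_i\ell_j\ell_k}=\frac1Q\#\{q:\ell^q_i=\ell_i,\ell^q_j=\ell_j,\ell^q_k=\ell_k\}$. Pair error correlation $\Gamma_{c,d;\ell}=\frac1{Q_\ell}\sum_q(\mathbf 1[\ell^q_c=\ell]-p_{c,\ell})(\mathbf 1[\ell^q_d=\ell]-p_{d,\ell})\mathbf 1[t_q=\ell]$; 3-way error correlation $\Gamma_{i,j,k;\ell}=\frac1{Q_\ell}\sum_q\prod_{c\in\{i,j,k\}}(\mathbf 1[\ell^q_c=\ell]-p_{c,\ell})\,\mathbf 1[t_q=\ell]$. Error independence means all pair and 3-way correlations vanish for both labels $\ell\in\{a,b\}$. *)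

From mathcomp Require Import all_boot all_order all_algebra.
Set Implicit Arguments. Unset Strict Implicit. Unset Printing Implicit Defensive.
Import Order.TTheory GRing.Theory Num.Theory.
Local Open Scope ring_scope.

Definition la : bool := true.
Definition lb : bool := false.

Section Defs.
Variables (R : realFieldType) (Q : nat).
(* t q : true label of item q;  a classifier c labels item q with c q. *)
Variable t : 'I_Q -> bool.

Definition Qlab (l : bool) : nat := #|[set q | t q == l]|.

Definition prevalence (l : bool) : R := (Qlab l)%:R / Q%:R.

Definition lacc (c : 'I_Q -> bool) (l : bool) : R :=
  #|[set q | (c q == l) && (t q == l)]|%:R / (Qlab l)%:R.

Definition ind (c : 'I_Q -> bool) (l : bool) (q : 'I_Q) : R :=
  if c q == l then 1 else 0.

Definition Gamma2 (c d : 'I_Q -> bool) (l : bool) : R :=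
  (Qlab l)%:R^-1 *
  \sum_(q < Q) (ind c l q - lacc c l) * (ind d l q - lacc d l)
                * (if t q == l then 1 else 0).

Definition Gamma3 (c d e : 'I_Q -> bool) (l : bool) : R :=
  (Qlab l)%:R^-1 *
  \sum_(q < Q) (ind c l q - lacc c l) * (ind d l q - lacc d l)
                * (ind e l q - lacc e l) * (if t q == l then 1 else 0).

Definition error_independent (ci cj ck : 'I_Q -> bool) : Prop :=
  forall l : bool,
    [/\ Gamma2 ci cj l = 0, Gamma2 ci ck l = 0, Gamma2 cj ck l = 0
      & Gamma3 ci cj ck l = 0].
End Defs.

Section Freq.
Variables (R : realFieldType) (Q : nat).
Definition freq (ci cj ck : 'I_Q -> bool) (x y z : bool) : R :=
  #|[set q | [&& ci q == x, cj q == y & ck q == z]]|%:R / Q%:R.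
End Freq.

From mathcomp Require Import all_boot all_order all_algebra.
From mathcomp Require Import ring.
Import Order.TTheory GRing.Theory Num.Theory.
Local Open Scope ring_scope.

(* Error independence says that, within the items of true label l, the three
   centred indicators 1[c q = l] - p_{c,l} have vanishing first, second and
   third mixed moments. Each cell indicator 1[(i,j,k) labels q as (x,y,z)] is a
   product of three affine functions of these centred indicators, so its average
   over class l is the product of the three label probabilities. Hence the
   observed frequencies form a mixture f = p_a F_a + p_b F_b of two product
   distributions. For such a mixture a direct computation gives
   Delta_{c,d} = p_a p_b d_c d_d and Delta_{i,j,k} = p_a p_b (p_b - p_a) d_i d_j d_k,
   with d_c = 1 - p_{c,a} - p_{c,b}; therefore
   alpha x^2 - alpha x + gamma = alpha (x - p_a) (x - p_b). *)

Set Implicit Arguments.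
Unset Strict Implicit.
Unset Printing Implicit Defensive.

Lemma card_set_sum (R : pzRingType) (T : finType) (P : pred T) :
  (#|[set x | P x]|%:R : R) = \sum_x (if P x then 1 else 0).
Proof.
rewrite -sum1_card natr_sum big_mkcond /=; apply: eq_bigr => x _.
by rewrite inE; case: (P x).
Qed.

Lemma sum_centred_affine3 (R : comPzRingType) (I : finType) (e1 e2 e3 w : I -> R)
    (n b1 b2 b3 s1 s2 s3 : R) :
  \sum_q w q = n ->
  \sum_q e1 q * w q = 0 -> \sum_q e2 q * w q = 0 -> \sum_q e3 q * w q = 0 ->
  \sum_q e1 q * e2 q * w q = 0 -> \sum_q e1 q * e3 q * w q = 0 ->
  \sum_q e2 q * e3 q * w q = 0 -> \sum_q e1 q * e2 q * e3 q * w q = 0 ->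
  \sum_q (b1 + s1 * e1 q) * (b2 + s2 * e2 q) * (b3 + s3 * e3 q) * w q
    = n * b1 * b2 * b3.
Proof.
move=> w_n m1 m2 m3 m12 m13 m23 m123.
rewrite (eq_bigr (fun q => b1 * b2 * b3 * w q + b1 * b2 * s3 * (e3 q * w q)
  + b1 * s2 * b3 * (e2 q * w q) + s1 * b2 * b3 * (e1 q * w q)
  + b1 * s2 * s3 * (e2 q * e3 q * w q) + s1 * b2 * s3 * (e1 q * e3 q * w q)
  + s1 * s2 * b3 * (e1 q * e2 q * w q) + s1 * s2 * s3 * (e1 q * e2 q * e3 q * w q))).
  by rewrite !big_split /= -!mulr_sumr w_n m1 m2 m3 m12 m13 m23 m123; ring.
by move=> q _; ring.
Qed.

Definition label_prob (R : pzRingType) (l x : bool) (p : R) : R :=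
  if x == l then p else 1 - p.

Definition label_sign (R : pzRingType) (l x : bool) : R :=
  if x == l then 1 else -1.

Lemma indicator_affine (R : comPzRingType) (l x b : bool) (p : R) :
  label_prob l x p + label_sign R l x * ((if b == l then 1 else 0) - p)
    = if b == x then 1 else 0.
Proof. by case: l; case: x; case: b; rewrite /label_prob /label_sign /=; ring. Qed.

Section TwoComponentMixture.
Variables (R : comPzRingType) (f : bool -> bool -> bool -> R).
Variables (A ai aj ak bi bj bk : R).

Hypothesis f_mixture : forall x y z,
  f x y z = A * label_prob la x ai * label_prob la y aj * label_prob la z ak
          + (1 - A) * label_prob lb x bi * label_prob lb y bj * label_prob lb z bk.

Lemma mixture_quadratic_factor :
  let fbi := f lb la la + f lb la lb + f lb lb la + f lb lb lb in
  let fbj := f la lb la + f la lb lb + f lb lb la + f lb lb lb in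
  let fbk := f la la lb + f la lb lb + f lb la lb + f lb lb lb in
  let Dij := f lb lb la + f lb lb lb - fbi * fbj in
  let Dik := f lb la lb + f lb lb lb - fbi * fbk in
  let Djk := f la lb lb + f lb lb lb - fbj * fbk in
  let Dijk := f lb lb lb - (fbi * fbj * fbk + fbi * Djk + fbj * Dik + fbk * Dij) in
  let alpha := Dijk ^+ 2 + 4 * Dij * Dik * Djk in
  let gamma := Dij * Dik * Djk in
  forall x, alpha * x ^+ 2 - alpha * x + gamma = alpha * (x - A) * (x - (1 - A)).
Proof.
move=> fbi fbj fbk Dij Dik Djk Dijk alpha gamma x.
set di := 1 - ai - bi; set dj := 1 - aj - bj; set dk := 1 - ak - bk.
have fbiE : fbi = A * (1 - ai) + (1 - A) * bi by rewrite /fbi !f_mixture /label_prob /=; ring.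
have fbjE : fbj = A * (1 - aj) + (1 - A) * bj by rewrite /fbj !f_mixture /label_prob /=; ring.
have fbkE : fbk = A * (1 - ak) + (1 - A) * bk by rewrite /fbk !f_mixture /label_prob /=; ring.
have DijE : Dij = A * (1 - A) * di * dj.
  by rewrite /Dij fbiE fbjE !f_mixture /label_prob /= /di /dj; ring.
have DikE : Dik = A * (1 - A) * di * dk.
  by rewrite /Dik fbiE fbkE !f_mixture /label_prob /= /di /dk; ring.
have DjkE : Djk = A * (1 - A) * dj * dk.
  by rewrite /Djk fbjE fbkE !f_mixture /label_prob /= /dj /dk; ring.
have DijkE : Dijk = A * (1 - A) * (1 - A - A) * di * dj * dk.
  by rewrite /Dijk DijE DikE DjkE fbiE fbjE fbkE !f_mixture /label_prob /= /di /dj /dk; ring.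
by rewrite /alpha /gamma DijkE DijE DikE DjkE; ring.
Qed.

End TwoComponentMixture.

Lemma quadratic_roots_of_factor (R : idomainType) (alpha gamma p : R) :
  (forall x, alpha * x ^+ 2 - alpha * x + gamma = alpha * (x - p) * (x - (1 - p))) ->
  alpha * p ^+ 2 - alpha * p + gamma = 0 /\
  (alpha != 0 ->
     forall x, alpha * x ^+ 2 - alpha * x + gamma = 0 <-> (x = p \/ x = 1 - p)).
Proof.
move=> factorE; split; first by rewrite factorE subrr mulr0 mul0r.
move=> alpha_neq0 x; rewrite factorE; split.
  move/eqP; rewrite !mulf_eq0 (negbTE alpha_neq0) /= !subr_eq0.
  by case/orP => /eqP ->; [left | right].
by case=> ->; rewrite subrr ?mulr0 ?mul0r.
Qed.

Section ErrorIndependentClassifiers.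
Variables (R : realFieldType) (Q : nat) (t ci cj ck : 'I_Q -> bool).

Lemma sum_label_indicator l :
  \sum_(q < Q) (if t q == l then 1 else 0) = (Qlab t l)%:R :> R.
Proof. by rewrite /Qlab card_set_sum. Qed.

Lemma QlabD : (Qlab t la + Qlab t lb = Q)%N.
Proof.
apply/eqP; rewrite -(eqr_nat R) natrD -!sum_label_indicator -big_split /=.
rewrite (eq_bigr (fun _ => 1)) ?sumr_const ?card_ord //.
by move=> q _; case: (t q); rewrite /= ?addr0 ?add0r.
Qed.

Lemma mulVr_Qlab_eq0 (F : 'I_Q -> R) l : (0 < Qlab t l)%N ->
  (Qlab t l)%:R^-1 * \sum_q F q = 0 -> \sum_q F q = 0.
Proof.
move=> Ql_gt0 /eqP; rewrite mulf_eq0 invr_eq0 pnatr_eq0 (negbTE (lt0n_neq0 Ql_gt0)) /=.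
exact/eqP.
Qed.

Lemma sum_centred_indicator (c : 'I_Q -> bool) l : (0 < Qlab t l)%N ->
  \sum_q (ind R c l q - lacc R t c l) * (if t q == l then 1 else 0) = 0.
Proof.
move=> Ql_gt0.
have Ql_neq0 : (Qlab t l)%:R != 0 :> R by rewrite pnatr_eq0 -lt0n.
have hitsE : #|[set q | (c q == l) && (t q == l)]|%:R
    = \sum_q ind R c l q * (if t q == l then 1 else 0) :> R.
  rewrite card_set_sum; apply: eq_bigr => q _; rewrite /ind.
  by case: (c q == l); case: (t q == l); rewrite ?mulr1 ?mulr0.
under eq_bigr do rewrite mulrBl.
by rewrite sumrB -mulr_sumr sum_label_indicator -hitsE /lacc divfK ?subrr.
Qed.

Hypothesis indep : error_independent R t ci cj ck.

Lemma class_cell_count x y z l : (0 < Qlab t l)%N ->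
  \sum_q (if [&& ci q == x, cj q == y & ck q == z] then 1 else 0)
     * (if t q == l then 1 else 0)
  = (Qlab t l)%:R * label_prob l x (lacc R t ci l) * label_prob l y (lacc R t cj l)
      * label_prob l z (lacc R t ck l).
Proof.
move=> Ql_gt0; have [G_ij G_ik G_jk G_ijk] := indep l.
rewrite -(sum_centred_affine3 _ _ _ (label_sign R l x) (label_sign R l y)
  (label_sign R l z) (sum_label_indicator l)
  (sum_centred_indicator ci Ql_gt0) (sum_centred_indicator cj Ql_gt0)
  (sum_centred_indicator ck Ql_gt0) (mulVr_Qlab_eq0 Ql_gt0 G_ij)
  (mulVr_Qlab_eq0 Ql_gt0 G_ik) (mulVr_Qlab_eq0 Ql_gt0 G_jk)
  (mulVr_Qlab_eq0 Ql_gt0 G_ijk)).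
apply: eq_bigr => q _; case: (t q == l); rewrite ?mulr0 // !mulr1 /ind.
rewrite !indicator_affine.
by case: (ci q == x); case: (cj q == y); case: (ck q == z); rewrite /= ?mulr1 ?mulr0 ?mul0r.
Qed.

Lemma freq_mixture : (0 < Qlab t la)%N -> (0 < Qlab t lb)%N ->
  forall x y z, freq R ci cj ck x y z =
    prevalence R t la * label_prob la x (lacc R t ci la)
      * label_prob la y (lacc R t cj la) * label_prob la z (lacc R t ck la)
    + (1 - prevalence R t la) * label_prob lb x (lacc R t ci lb)
      * label_prob lb y (lacc R t cj lb) * label_prob lb z (lacc R t ck lb).
Proof.
move=> Qa_gt0 Qb_gt0 x y z.
have QE : Q%:R = (Qlab t la)%:R + (Qlab t lb)%:R :> R by rewrite -natrD QlabD.
have Q_neq0 : Q%:R != 0 :> R.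
  by rewrite QE -natrD pnatr_eq0 addn_eq0 (negbTE (lt0n_neq0 Qa_gt0)).
have prev_lbE : 1 - prevalence R t la = (Qlab t lb)%:R / Q%:R.
  by apply: (mulIf Q_neq0); rewrite mulrBl mul1r !divfK // QE addrAC subrr add0r.
set cell := fun q => if [&& ci q == x, cj q == y & ck q == z] then 1 else 0 : R.
rewrite prev_lbE /freq card_set_sum -/cell.
rewrite (eq_bigr (fun q => cell q * (if t q == la then 1 else 0)
                         + cell q * (if t q == lb then 1 else 0))); last first.
  by move=> q _; case: (t q); rewrite /= ?mulr1 ?mulr0 ?addr0 ?add0r.
rewrite big_split /= !class_cell_count //.
by rewrite /prevalence; ring.
Qed.

End ErrorIndependentClassifiers.

Theorem mainTheorem3 (R : realFieldType) (Q : nat) (t li lj lk : 'I_Q -> bool) :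
  @error_independent R Q t li lj lk ->
  (0 < Qlab t la)%N -> (0 < Qlab t lb)%N ->
  let f := @freq R Q li lj lk in
  let fbi := f lb la la + f lb la lb + f lb lb la + f lb lb lb in
  let fbj := f la lb la + f la lb lb + f lb lb la + f lb lb lb in
  let fbk := f la la lb + f la lb lb + f lb la lb + f lb lb lb in
  let Dij := f lb lb la + f lb lb lb - fbi * fbj in
  let Dik := f lb la lb + f lb lb lb - fbi * fbk in
  let Djk := f la lb lb + f lb lb lb - fbj * fbk in
  let Dijk := f lb lb lb - (fbi * fbj * fbk + fbi * Djk + fbj * Dik + fbk * Dij) in
  let alpha := Dijk ^+ 2 + 4 * Dij * Dik * Djk in
  let gamma := Dij * Dik * Djk in
  let pa := @prevalence R Q t la in
  alpha * pa ^+ 2 - alpha * pa + gamma = 0 /\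
  (alpha != 0 ->
     forall x : R, alpha * x ^+ 2 - alpha * x + gamma = 0 <-> (x = pa \/ x = 1 - pa)).
Proof.
move=> indep Qa_gt0 Qb_gt0 f.
apply: quadratic_roots_of_factor.
exact: mixture_quadratic_factor (freq_mixture indep Qa_gt0 Qb_gt0).
Qed.
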